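(* Let $G$ be a graph of order $n$ with negative inertia $\nu^-=\nu^-(G)$. For a clique partition $F$ of $G$, let $t_i^F$ be the $i$th largest clique-degree with respect to $F$. Then $$\mathcal E(G)\le 2\min_F\sum_{i=1}^{\nu^-}t_i^F,$$ where the minimum is over all clique partitions $F$ of $G$. Equality holds if $G$ is clique-regular with respect to a minimum clique partition of size $cp(G)=n-\nu^-$.
   Context: All graphs are finite and simple. $\mathcal E(G)$ is the sum of the absolute values of the adjacency eigenvalues of $G$ and $\nu^-(G)$ the number of negative adjacency eigenvalues. A clique partition of $G$ is a set $F$ of cliques (sets of pairwise adjacent vertices) such that every edge lies in exactly one clique of $F$; $cp(G)$ is the minimum size of a clique partition, and a minimum clique partition is one of that size. The clique-degree of a vertex is the number of cliques of $F$ containing it; $G$ is clique-regular with respect to $F$ if all clique-degrees are equal. *)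

From mathcomp Require Import all_boot all_order all_algebra all_field.
Set Implicit Arguments. Unset Strict Implicit. Unset Printing Implicit Defensive.
Import Order.TTheory GRing.Theory Num.Theory.
Local Open Scope ring_scope.

Definition simple_graph (n : nat) (e : rel 'I_n) : Prop :=
  symmetric e /\ irreflexive e.

Definition adjmx (n : nat) (e : rel 'I_n) : 'M[algC]_n :=
  \matrix_(i, j) (e i j)%:R.

(* The eigenvalues (with multiplicity) of a square complex matrix: the roots
   of its (monic) characteristic polynomial, listed with multiplicity. *)
Definition eigenvalues (n : nat) (A : 'M[algC]_n) : seq algC :=
  sval (closed_field_poly_normal (char_poly A)).

Definition energy (n : nat) (e : rel 'I_n) : algC :=
  \sum_(z <- eigenvalues (adjmx e)) `|z|.

Definition neg_inertia (n : nat) (e : rel 'I_n) : nat :=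
  count (fun z : algC => z < 0) (eigenvalues (adjmx e)).

Definition is_clique (n : nat) (e : rel 'I_n) (C : {set 'I_n}) : bool :=
  [forall x in C, forall y in C, (x != y) ==> e x y].

Definition clique_partition (n : nat) (e : rel 'I_n) (F : {set {set 'I_n}}) : bool :=
  [forall C in F, is_clique e C] &&
  [forall x, forall y, e x y ==> (#|[set C in F | (x \in C) && (y \in C)]| == 1%N)].

Definition clique_degree (n : nat) (F : {set {set 'I_n}}) (v : 'I_n) : nat :=
  #|[set C in F | v \in C]|.

Definition clique_regular (n : nat) (F : {set {set 'I_n}}) : Prop :=
  forall u v, clique_degree F u = clique_degree F v.

Definition top_degree_sum (n : nat) (F : {set {set 'I_n}}) (k : nat) : nat :=
  (\sum_(d <- take k (sort geq [seq clique_degree F v | v <- enum 'I_n])) d)%N.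

(* The partition of the edge set into 2-cliques (a clique partition of any
   simple graph); used only as the neutral element of the minima below. *)
Definition edge_partition (n : nat) (e : rel 'I_n) : {set {set 'I_n}} :=
  [set [set x; y] | x in 'I_n, y in 'I_n & e x y].

Definition min_top_degree_sum (n : nat) (e : rel 'I_n) (k : nat) : nat :=
  \big[minn/top_degree_sum (edge_partition e) k]_(F : {set {set 'I_n}} |
     clique_partition e F) top_degree_sum F k.

Definition clique_partition_number (n : nat) (e : rel 'I_n) : nat :=
  \big[minn/#|edge_partition e|]_(F : {set {set 'I_n}} | clique_partition e F) #|F|.

(* Let M be the vertex-clique incidence matrix of a clique partition F and D
   the diagonal matrix of clique-degrees.  Then A + D = M M^*, so if
   A = P^* diag(lambda) P with P unitary, positivity of the diagonal of
   (PM)(PM)^* gives -lambda_i <= sum_u deg(u) |P_iu|^2 for every i.  As the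
   trace of A is 0, E(G) = -2 sum_{lambda_i < 0} lambda_i; summing over the
   negative eigenvalues bounds E(G)/2 by sum_u deg(u) w_u with weights
   0 <= w_u <= 1 of total mass nu^-, and such a weighted sum is at most the sum
   of the nu^- largest degrees.
   If moreover every clique-degree equals t and |F| = n - nu^-, then
   rank (A + t I) <= |F| makes -t an eigenvalue of multiplicity at least nu^-;
   these are then exactly the negative eigenvalues, so E(G) = 2 nu^- t. *)

From mathcomp Require Import all_boot all_order all_algebra all_field.
Import Order.TTheory GRing.Theory Num.Theory.
Set Implicit Arguments. Unset Strict Implicit. Unset Printing Implicit Defensive.
Local Open Scope ring_scope.
Local Open Scope sesquilinear_scope.

Definition top_sum (I : finType) (f : I -> nat) (k : nat) : nat :=
  (\sum_(x <- take k (sort geq [seq f i | i <- enum I])) x)%N.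

Lemma sorted_take_threshold (s : seq nat) (k : nat) :
  sorted geq s -> (k <= size s)%N ->
  exists t, (\sum_(x <- s) (x - t) + t * k = \sum_(x <- take k s) x)%N.
Proof.
move=> s_sorted le_k_s.
have geq_trans : transitive geq.
  by move=> y x z /= le_yx le_zy; exact: leq_trans le_zy le_yx.
have /allrelP take_ge_drop : allrel geq (take k s) (drop k s).
  move: s_sorted; rewrite sorted_pairwise //.
  by rewrite -{1}(cat_take_drop k s) pairwise_cat => /and3P[].
exists (\max_(y <- drop k s) y)%N.
rewrite -{1}(cat_take_drop k s) big_cat /=.
rewrite [\sum_(x <- drop k s) _]big1_seq ?addn0; last first.
  by move=> y /andP[_ y_drop]; apply/eqP; rewrite subn_eq0 (leq_bigmax_seq _ y_drop).
have -> : ((\max_(y <- drop k s) y) * k =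
    \sum_(x <- take k s) \max_(y <- drop k s) y)%N.
  by rewrite big_const_seq count_predT size_takel // iter_addn_0 mulnC.
rewrite -big_split /=; apply: eq_big_seq => x x_take; rewrite subnK //.
by apply/bigmax_leqP_seq => y y_drop _; exact: take_ge_drop.
Qed.

Lemma natr_mul_le_threshold (R : numDomainType) (a t : nat) (w : R) :
  0 <= w <= 1 -> a%:R * w <= (a - t)%:R + t%:R * w.
Proof.
case/andP=> w_ge0 w_le1; have [le_ta|lt_at] := leqP t a.
  by rewrite -[a in a%:R * _](subnK le_ta) natrD mulrDl lerD2r ler_piMr.
by rewrite (eqP (ltnW lt_at : (a - t == 0)%N)) add0r ler_wpM2r // ler_nat ltnW.
Qed.

Lemma weighted_sum_le_top_sum (R : numDomainType) (I : finType) (f : I -> nat)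
    (w : I -> R) (k : nat) :
  (forall i, 0 <= w i <= 1) -> \sum_i w i = k%:R ->
  \sum_i (f i)%:R * w i <= (top_sum f k)%:R.
Proof.
move=> w01 sum_w.
rewrite /top_sum; set s := sort geq _.
have s_sorted : sorted geq s by apply: sort_sorted => x y; exact: leq_total.
have le_k_s : (k <= size s)%N.
  rewrite size_sort size_map -cardE -(ler_nat R) -sum_w -sum1_card natr_sum.
  by apply: ler_sum => i _; case/andP: (w01 i).
have [t <-] := sorted_take_threshold s_sorted le_k_s.
have -> : (\sum_(x <- s) (x - t) = \sum_i (f i - t))%N.
  by rewrite (perm_big _ (permEl (perm_sort _ _))) big_map big_enum.
rewrite natrD natrM -sum_w mulr_sumr natr_sum -big_split /=.
by apply: ler_sum => i _; exact: natr_mul_le_threshold.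
Qed.

Lemma top_sum_le_const (I : finType) (f : I -> nat) (k t : nat) :
  (forall i, f i <= t)%N -> (top_sum f k <= k * t)%N.
Proof.
move=> f_le_t; rewrite /top_sum.
apply: (@leq_trans (\sum_(x <- take k (sort geq [seq f i | i <- enum I])) t)).
  rewrite big_seq [X in (_ <= X)%N]big_seq; apply: leq_sum => x /mem_take.
  by rewrite mem_sort => /mapP[i _ ->].
rewrite big_const_seq count_predT iter_addn_0 mulnC leq_mul2r.
by rewrite size_take_min geq_minl orbT.
Qed.

Lemma sum_norm_zero_sum (R : numDomainType) (I : finType) (x : I -> R) :
  (forall i, x i \is Num.real) -> \sum_i x i = 0 ->
  \sum_i `|x i| = (- \sum_(i | x i < 0) x i) *+ 2.
Proof.
move=> x_real sum_x0.
have sum_nonneg : \sum_(i | ~~ (x i < 0)) x i = - \sum_(i | x i < 0) x i.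
  move: sum_x0; rewrite (bigID (fun i => x i < 0)) /= addrC => /eqP.
  by rewrite addr_eq0 => /eqP.
rewrite (bigID (fun i => x i < 0)) /= mulr2n -{2}sum_nonneg -sumrN.
congr (_ + _); apply: eq_bigr => i.
  by move/ltr0_norm.
by rewrite -real_leNgt ?real0 // => /ger0_norm.
Qed.

Lemma card_diag_neq0_le_rank (F : fieldType) (m : nat) (v : 'rV[F]_m) :
  (#|[set i | v ord0 i != 0%R]| <= \rank (diag_mx v))%N.
Proof.
set S := [set i | v ord0 i != 0].
pose f (a : 'I_#|S|) : 'I_m := enum_val a.
have sub_diag : mxsub f f (diag_mx v) = diag_mx (\row_a v ord0 (f a)).
  by apply/matrixP => a b; rewrite !mxE (inj_eq enum_val_inj).
have sub_unit : mxsub f f (diag_mx v) \in unitmx.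
  rewrite sub_diag unitmxE det_diag unitfE; apply/prodf_neq0 => a _.
  by rewrite mxE; have := enum_valP a; rewrite inE.
have sub_mul :
    mxsub f f (diag_mx v) = rowsub f 1%:M *m diag_mx v *m colsub f 1%:M.
  by rewrite -mulmxA mulmx_colsub mulmx1 -mxsub_mul mul1mx.
rewrite -(mxrank_unit sub_unit) sub_mul.
exact: leq_trans (mxrankM_maxl _ _) (mxrankM_maxr _ _).
Qed.

Lemma char_poly_unitary_conj (F : fieldType) (m : nat) (P Q D : 'M[F]_m) :
  Q *m P = 1%:M -> char_poly (Q *m D *m P) = char_poly D.
Proof.
move=> QP; rewrite /char_poly /char_poly_mx.
have -> : 'X%:M - map_mx polyC (Q *m D *m P) =
    map_mx polyC Q *m ('X%:M - map_mx polyC D) *m map_mx polyC P.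
  rewrite mulmxBr mulmxBl -!map_mxM; congr (_ - _).
  by rewrite mul_mx_scalar -scalemxAl -map_mxM QP map_mx1 scalemx1.
by rewrite !det_mulmx mulrAC -det_mulmx -map_mxM QP map_mx1 det1 mul1r.
Qed.

Lemma unitarymx_row_norm (m : nat) (U : 'M[algC]_m) (i : 'I_m) :
  U \is unitarymx -> \sum_j `|U i j| ^+ 2 = 1.
Proof.
move=> /unitarymxP /matrixP /(_ i i); rewrite !mxE eqxx mulr1n => <-.
by apply: eq_bigr => j _; rewrite normCK !mxE.
Qed.

Lemma unitarymx_col_norm (m : nat) (U : 'M[algC]_m) (j : 'I_m) :
  U \is unitarymx -> \sum_i `|U i j| ^+ 2 = 1.
Proof.
rewrite -trmxC_unitary => /unitarymx_row_norm row_norm; rewrite -(row_norm j).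
by apply: eq_bigr => i _; rewrite !mxE norm_conjC.
Qed.

Section SpectralDecomposition.
Variables (n : nat) (A : 'M[algC]_n).
Hypothesis A_normal : A \is normalmx.
Local Notation P := (spectralmx A).
Local Notation d := (spectral_diag A).

Lemma spectral_mulmxtV : P *m P^t* = 1%:M.
Proof. exact/unitarymxP/spectral_unitarymx. Qed.

Lemma spectral_mulmxVt : P^t* *m P = 1%:M.
Proof. exact: mulmx1C spectral_mulmxtV. Qed.

Lemma spectral_decomposition : A = P^t* *m diag_mx d *m P.
Proof.
by rewrite -invmx_unitary ?spectral_unitarymx //; exact/orthomx_spectralP.
Qed.

Lemma spectral_conj : P *m A *m P^t* = diag_mx d.
Proof.
rewrite [X in _ *m X *m _]spectral_decomposition !mulmxA spectral_mulmxtV mul1mx.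
by rewrite -mulmxA spectral_mulmxtV mulmx1.
Qed.

Lemma eigenvalues_spectral_diag :
  perm_eq (eigenvalues A) [seq d 0 i | i <- enum 'I_n].
Proof.
rewrite /eigenvalues; case: closed_field_poly_normal => r /=.
rewrite (monicP (char_poly_monic A)) scale1r.
have -> : char_poly A = \prod_(i < n) ('X - (d 0 i)%:P).
  rewrite [in LHS]spectral_decomposition.
  rewrite char_poly_unitary_conj ?spectral_mulmxVt //.
  rewrite char_poly_trig ?diag_mx_is_trig //.
  by apply: eq_bigr => i _; rewrite mxE eqxx mulr1n.
move=> prod_r.
by apply: prod_XsubC_eq; rewrite -prod_r big_map big_enum.
Qed.

Lemma sum_spectral_diag : \sum_i d 0 i = \tr A.
Proof.
rewrite -mxtrace_diag -spectral_conj -mulmxA mxtrace_mulC.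
by rewrite -mulmxA spectral_mulmxVt mulmx1.
Qed.

Definition spectral_weight (S : {set 'I_n}) (u : 'I_n) : algC :=
  \sum_(i in S) `|P i u| ^+ 2.

Lemma spectral_weight_ge0 S u : 0 <= spectral_weight S u.
Proof. by apply: sumr_ge0 => i _; rewrite exprn_ge0. Qed.

Lemma spectral_weight_le1 S u : spectral_weight S u <= 1.
Proof.
rewrite -(unitarymx_col_norm u (spectral_unitarymx A)).
rewrite [X in _ <= X](bigID (mem S)) /=.
by rewrite lerDl; apply: sumr_ge0 => i _; rewrite exprn_ge0.
Qed.

Lemma sum_spectral_weight S : \sum_u spectral_weight S u = #|S|%:R.
Proof.
rewrite exchange_big /= -sumr_const; apply: eq_bigr => i _.
exact: unitarymx_row_norm (spectral_unitarymx A).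
Qed.

Lemma spectral_conj_gram (B : 'M[algC]_n) (m : nat) (X : 'M[algC]_(n, m)) :
  A + B = X *m X^t* -> (P *m X) *m (P *m X)^t* = diag_mx d + P *m B *m P^t*.
Proof.
move=> A_shift_gram.
rewrite trmx_mul map_mxM !mulmxA -(mulmxA P X) -A_shift_gram.
by rewrite mulmxDr mulmxDl spectral_conj.
Qed.

Section GramShift.
Variables (c : 'I_n -> algC) (m : nat) (X : 'M[algC]_(n, m)).
Hypothesis A_shift_gram : A + diag_mx (\row_u c u) = X *m X^t*.

Lemma spectral_diag_shift_ge0 i : 0 <= d 0 i + \sum_u c u * `|P i u| ^+ 2.
Proof.
have -> : d 0 i + \sum_u c u * `|P i u| ^+ 2 = ((P *m X) *m (P *m X)^t*) i i.
  rewrite (spectral_conj_gram A_shift_gram) mxE [diag_mx d i i]mxE eqxx mulr1n.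
  rewrite mul_mx_diag mxE; congr (_ + _).
  by apply: eq_bigr => u _; rewrite !mxE normCK mulrA [c u * _]mulrC.
by rewrite mxE sumr_ge0 // => j _; rewrite !mxE mul_conjC_ge0.
Qed.

Lemma neg_sum_spectral_diag_le (S : {set 'I_n}) :
  - \sum_(i in S) d 0 i <= \sum_u c u * spectral_weight S u.
Proof.
have -> : \sum_u c u * spectral_weight S u =
    \sum_(i in S) \sum_u c u * `|P i u| ^+ 2.
  by rewrite exchange_big; apply: eq_bigr => u _; rewrite mulr_sumr.
rewrite -subr_ge0 opprK addrC -big_split /=.
by apply: sumr_ge0 => i _; exact: spectral_diag_shift_ge0.
Qed.

End GramShift.

Lemma card_spectral_diag_neq_le (t : algC) (m : nat) (X : 'M[algC]_(n, m)) :
  A + t%:M = X *m X^t* -> (#|[set i | (d 0 i + t != 0)%R]| <= m)%N.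
Proof.
move=> A_shift_gram.
have -> : [set i | d 0 i + t != 0] = [set i | (d + const_mx t) ord0 i != 0%R].
  by apply/setP => i; rewrite !inE !mxE.
apply: leq_trans (card_diag_neq0_le_rank _) _.
have -> : diag_mx (d + const_mx t) = P *m X *m (P *m X)^t*.
  rewrite (spectral_conj_gram A_shift_gram).
  by rewrite linearD /= diag_const_mx mul_mx_scalar -scalemxAl spectral_mulmxtV scalemx1.
by apply: leq_trans (mxrankM_maxl _ _) _; exact: rank_leq_col.
Qed.

End SpectralDecomposition.

Lemma clique_regular_degree (n : nat) (F : {set {set 'I_n}}) :
  clique_regular F -> exists t, forall u, clique_degree F u = t.
Proof.
move=> F_regular; case: (pickP 'I_n) => [u0 _ | no_vertex].
  by exists (clique_degree F u0) => u; exact: F_regular.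
by exists 0%N => u; have := no_vertex u.
Qed.

Section SimpleGraph.
Variables (n : nat) (e : rel 'I_n).
Hypothesis e_simple : simple_graph e.
Local Notation A := (adjmx e).
Local Notation d := (spectral_diag (adjmx e)).

Lemma adjmx_hermitian : A \is hermsymmx.
Proof.
apply/is_hermitianmxP; rewrite expr0 scale1r; apply/matrixP => i j.
by rewrite !mxE conjC_nat; case: e_simple => e_sym _; rewrite e_sym.
Qed.

Let adjmx_normal : A \is normalmx := hermitian_normalmx adjmx_hermitian.

Lemma mxtrace_adjmx : \tr A = 0.
Proof.
by apply: big1 => i _; rewrite mxE; case: e_simple => _ e_irr; rewrite e_irr.
Qed.

Lemma energy_spectral : energy e = \sum_i `|d 0 i|.
Proof.
rewrite /energy (perm_big _ (eigenvalues_spectral_diag adjmx_normal)).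
by rewrite big_map big_enum.
Qed.

Definition neg_eigen_index : {set 'I_n} := [set i | d 0 i < 0].

Lemma neg_inertia_spectral : neg_inertia e = #|neg_eigen_index|.
Proof.
rewrite /neg_inertia (permP (eigenvalues_spectral_diag adjmx_normal)).
rewrite -sum1_count big_map big_enum_cond -sum1_card.
by apply: eq_bigl => i; rewrite !inE.
Qed.

Lemma energy_neg_spectral :
  energy e = (- \sum_(i in neg_eigen_index) d 0 i) *+ 2.
Proof.
rewrite energy_spectral sum_norm_zero_sum.
- by under [in RHS]eq_bigl do rewrite inE.
- exact: (mxOverP (hermitian_spectral_diag_real adjmx_hermitian)).
- by rewrite (sum_spectral_diag adjmx_normal) mxtrace_adjmx.
Qed.

Lemma edge_partitionP C :
  reflect (exists x y, e x y /\ C = [set x; y]) (C \in edge_partition e).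
Proof.
apply: (iffP imset2P) => [[x y _] | [x [y [exy ->]]]].
  by rewrite inE => exy ->; exists x, y.
by apply: (Imset2spec (x1 := x) (x2 := y)); rewrite ?inE.
Qed.

Lemma edge_partition_clique_partition : clique_partition e (edge_partition e).
Proof.
case: e_simple => e_sym e_irr; apply/andP; split.
  apply/forallP => C; apply/implyP => /edge_partitionP [x [y [exy ->]]].
  apply/forallP => a; apply/implyP; rewrite !inE => /orP[]/eqP->;
  apply/forallP => b; apply/implyP; rewrite !inE => /orP[]/eqP->;
  by rewrite ?eqxx //= ?[e y x]e_sym exy implybT.
apply/forallP => a; apply/forallP => b; apply/implyP => eab.
have neq_ab : a != b by apply: contraTneq eab => ->; rewrite e_irr.
suff -> : [set C in edge_partition e | (a \in C) && (b \in C)] = [set [set a; b]].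
  by rewrite cards1.
apply/setP => C; rewrite !inE; apply/andP/eqP => [[] | ->].
  case/edge_partitionP => x [y [exy ->]]; rewrite !inE.
  case/andP => /orP[]/eqP a_xy /orP[]/eqP b_xy; move: neq_ab;
  by rewrite a_xy b_xy ?eqxx // => _; rewrite setUC.
by split; [apply/edge_partitionP; exists a, b | rewrite !inE !eqxx orbT].
Qed.

Section CliquePartition.
Variable F : {set {set 'I_n}}.
Hypothesis F_partition : clique_partition e F.
Local Notation deg := (clique_degree F).

Lemma card_cliques_through2 u v :
  (e u v + deg u * (u == v))%N = #|[set C in F | (u \in C) && (v \in C)]|.
Proof.
case/andP: F_partition => /forallP F_cliques /forallP F_cover.
case: e_simple => _ e_irr.
have [<- | neq_uv] := eqVneq u v.
  by rewrite e_irr muln1; apply: eq_card => C; rewrite !inE andbb.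
rewrite muln0 addn0; case euv: (e u v).
  by have /implyP /(_ euv) /eqP -> := forallP (F_cover u) v.
apply/esym/eqP; rewrite cards_eq0; apply/eqP/setP => C; rewrite !inE.
apply/negbTE/andP => -[CF /andP[uC vC]].
have /forallP /(_ u) := implyP (F_cliques C) CF.
by rewrite uC => /forallP /(_ v); rewrite vC neq_uv euv.
Qed.

Definition incidence_mx : 'M[algC]_(n, #|F|) :=
  \matrix_(u, j) ((u \in (enum_val j : {set 'I_n})) : nat)%:R.

Lemma adjmx_add_degree_gram :
  A + diag_mx (\row_u (deg u)%:R) = incidence_mx *m incidence_mx^t*.
Proof.
apply/matrixP => u v; rewrite !mxE -mulrnA -natrD card_cliques_through2.
under eq_bigr => j _ do rewrite !mxE conjC_nat -natrM mulnb.
rewrite -(big_enum_val (A := mem F) (fun C => ((u \in C) && (v \in C) : nat)%:R)).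
rewrite -natr_sum -sum1_card big_mkcond [in RHS]big_mkcond /=.
by congr (_%:R); apply: eq_bigr => C _; rewrite !inE; case: (C \in F).
Qed.

Lemma energy_le_top_degree_sum :
  energy e <= (2 * top_degree_sum F (neg_inertia e))%:R.
Proof.
rewrite energy_neg_spectral neg_inertia_spectral natrM mulr_natl lerMn2r /=.
apply: le_trans (neg_sum_spectral_diag_le adjmx_normal adjmx_add_degree_gram _) _.
apply: weighted_sum_le_top_sum; last exact: sum_spectral_weight.
by move=> u; rewrite spectral_weight_ge0 spectral_weight_le1.
Qed.

Lemma top_degree_sum_le_energy t :
  (forall u, deg u = t) -> #|F| = (n - neg_inertia e)%N ->
  (2 * top_degree_sum F (neg_inertia e))%:R <= energy e.
Proof.
move=> deg_t card_F.
rewrite energy_neg_spectral natrM mulr_natl lerMn2r /=.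
apply: (@le_trans _ _ (neg_inertia e * t)%:R).
  by rewrite ler_nat; apply: top_sum_le_const => u; rewrite deg_t.
rewrite neg_inertia_spectral; set N := neg_eigen_index.
have [-> | t_gt0] := posnP t.
  rewrite muln0 -sumrN; apply: sumr_ge0 => i; rewrite inE oppr_ge0; exact: ltW.
set Z : {set 'I_n} := [set i | d 0 i + t%:R == 0].
have sub_ZN : Z \subset N.
  by apply/subsetP => i; rewrite !inE addr_eq0 => /eqP ->; rewrite oppr_lt0 ltr0n.
have card_notZ : (#|~: Z| <= n - #|N|)%N.
  rewrite -neg_inertia_spectral -card_F.
  have gram_t : A + t%:R%:M = incidence_mx *m incidence_mx^t*.
    rewrite -adjmx_add_degree_gram -diag_const_mx; congr (_ + _).
    by congr diag_mx; apply/rowP => u; rewrite !mxE deg_t.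
  have := card_spectral_diag_neq_le adjmx_normal gram_t.
  by congr (_ <= _)%N; apply: eq_card => i; rewrite !inE.
have le_N_n : (#|N| <= n)%N by rewrite -[n in (_ <= n)%N]card_ord max_card.
have le_N_Z : (#|N| <= #|Z|)%N.
  by rewrite -(leq_add2r #|~: Z|) cardsC card_ord -(leq_subRL _ le_N_n).
have Z_eq_N : Z = N by apply/eqP; rewrite eqEcard sub_ZN.
rewrite -Z_eq_N -sumrN (eq_bigr (fun=> t%:R)) ?sumr_const; last first.
  by move=> i; rewrite inE addr_eq0 => /eqP ->; rewrite opprK.
by rewrite Z_eq_N mulnC natrM mulr_natr.
Qed.

End CliquePartition.
End SimpleGraph.

Theorem mainTheorem12 (n : nat) (e : rel 'I_n) :
  simple_graph e ->
  energy e <= (2 * min_top_degree_sum e (neg_inertia e))%:R /\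
  ((exists F : {set {set 'I_n}},
      [/\ clique_partition e F,
          #|F| = clique_partition_number e,
          clique_partition_number e = (n - neg_inertia e)%N &
          clique_regular F]) ->
   energy e = (2 * min_top_degree_sum e (neg_inertia e))%:R).
Proof.
move=> e_simple.
have energy_le_min : energy e <= (2 * min_top_degree_sum e (neg_inertia e))%:R.
  apply: (big_ind (fun k => energy e <= (2 * k)%:R)).
  - exact/energy_le_top_degree_sum/edge_partition_clique_partition.
  - by move=> k1 k2; rewrite /minn; case: ifP.
  - by move=> F; exact: energy_le_top_degree_sum.
split=> // -[F [F_partition card_F cp_e F_regular]].
have [t deg_t] := clique_regular_degree F_regular.
apply/le_anti; rewrite energy_le_min /=.
apply: le_trans (top_degree_sum_le_energy e_simple F_partition deg_t _); last first.
  by rewrite card_F cp_e.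
have := bigmin_le_cond (top_degree_sum (edge_partition e) (neg_inertia e))
  (fun F => top_degree_sum F (neg_inertia e)) F_partition.
by rewrite minEnat leEnat ler_nat leq_mul2l => ->; rewrite orbT.
Qed.
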